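(* Let $X,Y,Z$ be countable discrete metric spaces of bounded geometry, $d_{XY},d'_{XY}\in D(X,Y)$, $d_{YZ},d'_{YZ}\in D(Y,Z)$, with $M_{d_{XY}}(X,Y)=M_{d'_{XY}}(X,Y)$ and $M_{d_{YZ}}(Y,Z)=M_{d'_{YZ}}(Y,Z)$. Then $M_{d_{YZ}\circ d_{XY}}(X,Z)=M_{d'_{YZ}\circ d'_{XY}}(X,Z)$.
   Context: Bounded geometry: for every $R>0$ the number of points in balls of radius $R$ is finite and uniformly bounded. $D(X,Y)$ is the set of metrics on $X\sqcup Y$ restricting to $d_X,d_Y$. For $T:H_X=l^2(X)\to H_Y=l^2(Y)$ bounded, $T_{yx}=\langle T\delta_x,\delta_y\rangle$; $T$ has propagation less than $L$ w.r.t. $d$ if $T_{yx}=0$ whenever $d(x,y)\ge L$; $M_d(X,Y)$ is the norm closure of bounded finite-propagation operators. $(d_{YZ}\circ d_{XY})$ is the metric on $X\sqcup Z$ extending $d_X,d_Z$ with $(d_{YZ}\circ d_{XY})(x,z)=\inf_{y\in Y}(d_{XY}(x,y)+d_{YZ}(y,z))$. *)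

From Stdlib Require Import Reals List ClassicalDescription.
Open Scope R_scope.

Definition C := (R * R)%type.
Definition C0 : C := (0, 0).
Definition C1 : C := (1, 0).
Definition Cadd (a b : C) : C := (fst a + fst b, snd a + snd b).
Definition Copp (a : C) : C := (- fst a, - snd a).
Definition Cmul (a b : C) : C :=
  (fst a * fst b - snd a * snd b, fst a * snd b + snd a * fst b).
Definition Cnorm2 (a : C) : R := fst a ^ 2 + snd a ^ 2.

Definition vadd {X : Type} (u v : X -> C) : X -> C := fun x => Cadd (u x) (v x).
Definition vscale {X : Type} (a : C) (u : X -> C) : X -> C := fun x => Cmul a (u x).
Definition vsub {X : Type} (u v : X -> C) : X -> C := fun x => Cadd (u x) (Copp (v x)).

Definition sumsq {X : Type} (u : X -> C) (l : list X) : R :=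
  fold_right (fun x acc => Cnorm2 (u x) + acc) 0 l.

(** ||u|| <= |r| *)
Definition l2_bound {X : Type} (u : X -> C) (r : R) : Prop :=
  forall l : list X, NoDup l -> sumsq u l <= r ^ 2.

Definition in_l2 {X : Type} (u : X -> C) : Prop := exists r, l2_bound u r.

Definition delta {X : Type} (x : X) : X -> C :=
  fun x' => if excluded_middle_informative (x' = x) then C1 else C0.

(** an operator H_X -> H_Y; only its values on l^2 vectors matter *)
Definition op (X Y : Type) := (X -> C) -> (Y -> C).

Definition is_linear {X Y : Type} (T : op X Y) : Prop :=
  forall (u v : X -> C) (a : C), in_l2 u -> in_l2 v ->
    T (vadd (vscale a u) v) = vadd (vscale a (T u)) (T v).

Definition opnorm_le {X Y : Type} (T : op X Y) (c : R) : Prop :=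
  forall (u : X -> C) (r : R), l2_bound u r -> l2_bound (T u) (c * r).

Definition is_bounded_op {X Y : Type} (T : op X Y) : Prop :=
  is_linear T /\ exists c, opnorm_le T c.

Definition opsub {X Y : Type} (T S : op X Y) : op X Y :=
  fun u => vsub (T u) (S u).

Definition entry {X Y : Type} (T : op X Y) (x : X) (y : Y) : C := T (delta x) y.

Definition has_propagation_lt {X Y : Type} (d : X + Y -> X + Y -> R)
  (T : op X Y) (L : R) : Prop :=
  forall x y, L <= d (inl x) (inr y) -> entry T x y = C0.

Definition finite_propagation {X Y : Type} (d : X + Y -> X + Y -> R)
  (T : op X Y) : Prop := exists L, has_propagation_lt d T L.

(** membership in M_d(X,Y): norm closure of bounded finite-propagation operators *)
Definition in_M {X Y : Type} (d : X + Y -> X + Y -> R) (T : op X Y) : Prop :=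
  is_bounded_op T /\
  forall eps, 0 < eps ->
    exists S : op X Y, is_bounded_op S /\ finite_propagation d S /\
      opnorm_le (opsub T S) eps.

Definition is_metric {A : Type} (d : A -> A -> R) : Prop :=
  (forall a b, d a b = 0 <-> a = b) /\
  (forall a b, d a b = d b a) /\
  (forall a b c, d a c <= d a b + d b c).

Definition countable (A : Type) : Prop :=
  exists f : A -> nat, forall a b, f a = f b -> a = b.

Definition discrete_metric {A : Type} (d : A -> A -> R) : Prop :=
  forall a, exists eps, 0 < eps /\ forall b, d a b < eps -> b = a.

Definition bounded_geometry {A : Type} (d : A -> A -> R) : Prop :=
  forall Rad, 0 < Rad -> exists N : nat, forall a, exists l : list A,
    (length l <= N)%nat /\ forall b, d a b <= Rad -> In b l.

Definition cdbg_space {A : Type} (d : A -> A -> R) : Prop :=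
  is_metric d /\ countable A /\ discrete_metric d /\ bounded_geometry d.

Definition in_D {X Y : Type} (dX : X -> X -> R) (dY : Y -> Y -> R)
  (d : X + Y -> X + Y -> R) : Prop :=
  is_metric d /\
  (forall a b, d (inl a) (inl b) = dX a b) /\
  (forall a b, d (inr a) (inr b) = dY a b).

Definition is_inf (P : R -> Prop) (m : R) : Prop :=
  (forall r, P r -> m <= r) /\ (forall m', (forall r, P r -> m' <= r) -> m' <= m).

Definition is_comp {X Y Z : Type} (dX : X -> X -> R) (dZ : Z -> Z -> R)
  (dXY : X + Y -> X + Y -> R) (dYZ : Y + Z -> Y + Z -> R)
  (d : X + Z -> X + Z -> R) : Prop :=
  (forall a b, d (inl a) (inl b) = dX a b) /\
  (forall a b, d (inr a) (inr b) = dZ a b) /\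
  (forall x z,
     is_inf (fun r => exists y : Y, r = dXY (inl x) (inr y) + dYZ (inl y) (inr z))
            (d (inl x) (inr z)) /\
     d (inr z) (inl x) = d (inl x) (inr z)).

(* Say [d] controls [d'] when pairs (x, y) at bounded [d]-distance are at
   bounded [d']-distance.  If [M_d ⊆ M_d'] then [d] controls [d']: otherwise
   there are pairs at [d]-distance [< L] whose [d']-distances grow fast enough
   to make them injective in both coordinates, and the partial translation
   along them lies in [M_d] but has entries 1 arbitrarily far out for [d'],
   whereas entries of an element of [M_d'] become small far from the diagonal.
   Conversely control gives [M_d ⊆ M_d'] at once, and control passes to
   composites through the infimum over [y]. *)
From Pilot Require Import Defs.
From Stdlib Require Import Reals Lra List Classical FunctionalExtensionality.
From Stdlib Require Import ClassicalEpsilon ClassicalDescription.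
Open Scope R_scope.

Lemma metric_nonneg {T : Type} (d : T -> T -> R) : is_metric d -> forall a b, 0 <= d a b.
Proof.
  intros [H0 [Hs Ht]] a b. pose proof (Ht a b a) as Htri.
  rewrite (proj2 (H0 a a) eq_refl), (Hs b a) in Htri. lra.
Qed.

Lemma is_inf_lt {P : R -> Prop} {m L : R} : is_inf P m -> m < L -> exists r, P r /\ r < L.
Proof.
  intros [_ Hgl] HmL. apply NNPP; intro Hno.
  enough (L <= m) by lra.
  apply Hgl. intros r Hr. apply Rnot_lt_le; intro. apply Hno. now exists r.
Qed.

Lemma delta_same {X : Type} (x : X) : delta x x = Defs.C1.
Proof. unfold delta. destruct (excluded_middle_informative (x = x)); [reflexivity|contradiction]. Qed.

Lemma delta_other {X : Type} (x a : X) : a <> x -> delta x a = Defs.C0.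
Proof. unfold delta. destruct (excluded_middle_informative (a = x)); [contradiction|reflexivity]. Qed.

Lemma sumsq_delta {X : Type} (x : X) (l : list X) : NoDup l ->
  sumsq (delta x) l <= 1 /\ (~ In x l -> sumsq (delta x) l = 0).
Proof.
  induction l as [|a l IH]; intros Hl; simpl; [split; [lra|auto]|].
  inversion Hl as [|? ? Ha Hl']; subst. destruct (IH Hl') as [IH1 IH2].
  destruct (excluded_middle_informative (a = x)) as [->|Hax].
  - rewrite delta_same, (IH2 Ha). unfold Cnorm2, Defs.C1; simpl.
    split; [lra|]. intros H; exfalso; apply H; now left.
  - rewrite (delta_other x a Hax). unfold Cnorm2, Defs.C0; simpl. split; [lra|].
    intros H. rewrite IH2 by (intro; apply H; now right). lra.
Qed.

Lemma delta_l2_bound {X : Type} (x : X) : l2_bound (delta x) 1.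
Proof. intros l Hl. rewrite pow1. apply (sumsq_delta x l Hl). Qed.

Lemma entry_le_opnorm {X Y : Type} (T : op X Y) (c : R) (x : X) (y : Y) :
  opnorm_le T c -> Cnorm2 (entry T x y) <= c ^ 2.
Proof.
  intros HT. pose proof (HT _ _ (delta_l2_bound x) (y :: nil)) as Hy.
  assert (Hnd : NoDup (y :: nil)) by (constructor; [intros []|constructor]).
  specialize (Hy Hnd). simpl in Hy. unfold entry. nra.
Qed.

Lemma in_M_of_finite_propagation {X Y : Type} (d : X + Y -> X + Y -> R) (T : op X Y) :
  is_bounded_op T -> finite_propagation d T -> in_M d T.
Proof.
  intros Hb Hp. split; [exact Hb|]. intros eps _. exists T.
  split; [exact Hb | split; [exact Hp|]].
  intros u r _ l _.
  replace (sumsq (opsub T T u) l) with 0; [apply pow2_ge_0|].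
  induction l as [|a l IH]; simpl; [reflexivity|].
  rewrite <- IH. unfold opsub, vsub, Cadd, Copp, Cnorm2; simpl. ring.
Qed.

Lemma in_M_entry_vanishing {X Y : Type} (d : X + Y -> X + Y -> R) (T : op X Y) eps :
  in_M d T -> 0 < eps ->
  exists L, forall x y, L <= d (inl x) (inr y) -> Cnorm2 (entry T x y) <= eps ^ 2.
Proof.
  intros [_ Happ] Heps. destruct (Happ eps Heps) as [S [_ [[L HS] HTS]]].
  exists L. intros x y Hxy. pose proof (entry_le_opnorm _ _ x y HTS) as Hb.
  unfold entry, opsub, vsub in Hb. fold (entry S x y) in Hb. rewrite (HS x y Hxy) in Hb.
  unfold entry. unfold Cnorm2, Cadd, Copp, Defs.C0 in *; simpl in *.
  replace (fst (T (delta x) y) + - 0) with (fst (T (delta x) y)) in Hb by ring.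
  replace (snd (T (delta x) y) + - 0) with (snd (T (delta x) y)) in Hb by ring.
  exact Hb.
Qed.

Section PartialTranslation.
Variables (A B : Type) (f : nat -> A * B).
Hypothesis fst_inj : forall n m, fst (f n) = fst (f m) -> n = m.
Hypothesis snd_inj : forall n m, snd (f n) = snd (f m) -> n = m.

Definition snd_index (b : B) : option nat :=
  match excluded_middle_informative (exists n, snd (f n) = b) with
  | left H => Some (proj1_sig (constructive_indefinite_description _ H))
  | right _ => None
  end.

Lemma snd_indexP b n : snd_index b = Some n -> snd (f n) = b.
Proof.
  unfold snd_index. destruct (excluded_middle_informative _) as [e|]; [|discriminate].
  destruct (constructive_indefinite_description _ e) as [m Hm]; simpl.
  now intros [= <-].
Qed.

Lemma snd_index_snd n : snd_index (snd (f n)) = Some n.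
Proof.
  unfold snd_index. destruct (excluded_middle_informative _) as [e|e].
  - destruct (constructive_indefinite_description _ e) as [m Hm]; simpl.
    f_equal; now apply snd_inj.
  - exfalso; apply e; now exists n.
Qed.

(* Sends [δ_(fst (f n))] to [δ_(snd (f n))]. *)
Definition partial_translation : op A B := fun u b =>
  match snd_index b with Some n => u (fst (f n)) | None => Defs.C0 end.

Lemma partial_translation_linear : is_linear partial_translation.
Proof.
  intros u v a _ _. apply functional_extensionality; intro b.
  unfold partial_translation, vadd, vscale. destruct (snd_index b); auto.
  unfold Cadd, Cmul, Defs.C0; simpl; f_equal; ring.
Qed.

(* [l'] lists the preimages of the points of [l] hit by [f], hence carries the same mass. *)
Lemma sumsq_partial_translation u l : NoDup l ->
  exists l', NoDup l' /\ sumsq (partial_translation u) l = sumsq u l' /\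
    forall a, In a l' -> exists m, a = fst (f m) /\ In (snd (f m)) l.
Proof.
  induction l as [|b l IH]; intros Hl.
  { exists nil; repeat split; [constructor | intros a []]. }
  inversion Hl as [|? ? Hb Hl']; subst. destruct (IH Hl') as [l' [Hnd [Hsum Hsrc]]].
  destruct (snd_index b) as [n|] eqn:E.
  - exists (fst (f n) :: l'). repeat split.
    + constructor; auto. intros Hin. destruct (Hsrc _ Hin) as [m [Hm Hml]].
      apply fst_inj in Hm as ->. rewrite (snd_indexP _ _ E) in Hml. contradiction.
    + simpl. unfold partial_translation at 1. now rewrite E, Hsum.
    + intros a [<-|Ha].
      * exists n. split; auto. left. symmetry. exact (snd_indexP _ _ E).
      * destruct (Hsrc _ Ha) as [m [Hm Hml]]. exists m. split; auto. now right.
  - exists l'. repeat split; auto.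
    + simpl. unfold partial_translation at 1. rewrite E, Hsum.
      unfold Cnorm2, Defs.C0; simpl; ring.
    + intros a Ha. destruct (Hsrc _ Ha) as [m [Hm Hml]]. exists m. split; auto. now right.
Qed.

Lemma partial_translation_bounded : is_bounded_op partial_translation.
Proof.
  split; [apply partial_translation_linear|]. exists 1.
  intros u r Hu l Hl. destruct (sumsq_partial_translation u l Hl) as [l' [Hnd [-> _]]].
  rewrite Rmult_1_l. now apply Hu.
Qed.

Lemma entry_partial_translation n :
  entry partial_translation (fst (f n)) (snd (f n)) = Defs.C1.
Proof.
  unfold entry, partial_translation. now rewrite snd_index_snd, delta_same.
Qed.

Lemma partial_translation_propagation (d : A + B -> A + B -> R) L :
  (forall n, d (inl (fst (f n))) (inr (snd (f n))) < L) ->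
  has_propagation_lt d partial_translation L.
Proof.
  intros Hf a b Hab. unfold entry, partial_translation.
  destruct (snd_index b) as [n|] eqn:E; auto. apply delta_other. intros Ha.
  apply snd_indexP in E. specialize (Hf n). rewrite E, Ha in Hf. lra.
Qed.

End PartialTranslation.

Definition cross_controlled {A B : Type} (d d' : A + B -> A + B -> R) : Prop :=
  forall L, exists L', forall a b, d (inl a) (inr b) < L -> d' (inl a) (inr b) < L'.

Lemma in_M_incl_of_cross_controlled {A B : Type} (d d' : A + B -> A + B -> R) (T : op A B) :
  cross_controlled d d' -> in_M d T -> in_M d' T.
Proof.
  intros Hc [Hb Happ]. split; auto. intros eps Heps.
  destruct (Happ eps Heps) as [S [HSb [[L HL] HSn]]]. exists S.
  split; [exact HSb | split; [|exact HSn]].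
  destruct (Hc L) as [L' HL']. exists L'. intros a b Hab. apply HL.
  apply Rnot_lt_le; intro Hlt. specialize (HL' a b Hlt). lra.
Qed.

Lemma comp_cross_controlled {X Y Z : Type} (dX : X -> X -> R) (dZ : Z -> Z -> R)
  (dXY dXY' : X + Y -> X + Y -> R) (dYZ dYZ' : Y + Z -> Y + Z -> R)
  (dXZ dXZ' : X + Z -> X + Z -> R) :
  is_metric dXY -> is_metric dYZ ->
  cross_controlled dXY dXY' -> cross_controlled dYZ dYZ' ->
  is_comp dX dZ dXY dYZ dXZ -> is_comp dX dZ dXY' dYZ' dXZ' ->
  cross_controlled dXZ dXZ'.
Proof.
  intros mXY mYZ cXY cYZ [_ [_ Hinf]] [_ [_ Hinf']] L.
  destruct (cXY L) as [L1 H1], (cYZ L) as [L2 H2]. exists (L1 + L2).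
  intros x z Hxz. destruct (is_inf_lt (proj1 (Hinf x z)) Hxz) as [r [[y ->] Hy]].
  pose proof (metric_nonneg _ mXY (inl x) (inr y)).
  pose proof (metric_nonneg _ mYZ (inl y) (inr z)).
  pose proof (H1 x y ltac:(lra)). pose proof (H2 y z ltac:(lra)).
  pose proof (proj1 (proj1 (Hinf' x z)) _ (ex_intro _ y eq_refl)). lra.
Qed.

(* Two pairs at [d]-distance [< L] whose [d']-distances differ by at least [2L]
   share no coordinate: the common-endpoint triangle bound would be violated. *)
Lemma far_pairs_disjoint {A B : Type} (dA : A -> A -> R) (dB : B -> B -> R)
  (d d' : A + B -> A + B -> R) L a b a' b' :
  in_D dA dB d -> in_D dA dB d' ->
  d (inl a) (inr b) < L -> d (inl a') (inr b') < L ->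
  d' (inl a) (inr b) + 2 * L <= d' (inl a') (inr b') ->
  a <> a' /\ b <> b'.
Proof.
  intros [[_ [Hs Ht]] [HA HB]] [[_ [_ Ht']] [HA' HB']] Hab Hab' Hfar.
  split; intros <-.
  - pose proof (Ht' (inl a) (inr b) (inr b')). rewrite HB', <- HB in H.
    pose proof (Ht (inr b) (inl a) (inr b')). pose proof (Hs (inr b) (inl a)). lra.
  - pose proof (Ht' (inl a') (inl a) (inr b)). rewrite HA', <- HA in H.
    pose proof (Ht (inl a') (inr b) (inl a)). pose proof (Hs (inl a) (inr b)).
    pose proof (Hs (inl a') (inl a)). lra.
Qed.

Lemma increasing_gap_seq {P : Type} (Q : P -> Prop) (g : P -> R) G :
  (forall M, exists p, Q p /\ M <= g p) ->
  exists f : nat -> P, (forall n, Q (f n)) /\ forall n, g (f n) + G <= g (f (S n)).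
Proof.
  intros Hunb. destruct (choice _ Hunb) as [h Hh].
  exists (fun n => nat_rect (fun _ => P) (h 0) (fun _ p => h (g p + G)) n).
  split; [intros [|n]; apply Hh | intros n; apply Hh].
Qed.

Lemma gap_seq_lt {P : Type} (g : P -> R) (f : nat -> P) G : 0 <= G ->
  (forall n, g (f n) + G <= g (f (S n))) ->
  forall k m, (k < m)%nat -> g (f k) + G <= g (f m).
Proof.
  intros HG Hstep k m Hkm. induction Hkm as [|m Hkm IH]; [apply Hstep|].
  pose proof (Hstep m). lra.
Qed.

Lemma gap_seq_unbounded {P : Type} (g : P -> R) (f : nat -> P) :
  0 <= g (f O) -> (forall n, g (f n) + 1 <= g (f (S n))) ->
  forall M, exists n, M <= g (f n).
Proof.
  intros H0 Hstep M. destruct (INR_archimed 1 M) as [n Hn]; [lra|].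
  exists n. enough (INR n <= g (f n)) by lra.
  clear Hn. induction n as [|n IH]; [exact H0|]. rewrite S_INR. pose proof (Hstep n). lra.
Qed.

Lemma inj_of_lt_neq {P : Type} (h : nat -> P) :
  (forall k m, (k < m)%nat -> h k <> h m) -> forall n m, h n = h m -> n = m.
Proof.
  intros Hneq n m E. destruct (Nat.lt_total n m) as [Hlt|[->|Hlt]]; auto;
    exfalso; [|symmetry in E]; exact (Hneq _ _ Hlt E).
Qed.

Lemma cross_controlled_of_in_M_incl {A B : Type} (dA : A -> A -> R) (dB : B -> B -> R)
  (d d' : A + B -> A + B -> R) :
  in_D dA dB d -> in_D dA dB d' ->
  (forall T, in_M d T -> in_M d' T) -> cross_controlled d d'.
Proof.
  intros hd hd' HM L. apply NNPP; intro Hn.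
  set (dp := fun p : A * B => d (inl (fst p)) (inr (snd p))).
  set (dp' := fun p : A * B => d' (inl (fst p)) (inr (snd p))).
  assert (Hunb : forall M, exists p, dp p < L /\ M <= dp' p).
  { intros M. apply NNPP; intro Hno. apply Hn. exists M. intros a b Hab.
    apply Rnot_le_lt; intro. apply Hno. now exists (a, b). }
  assert (HL : 0 < L).
  { destruct (Hunb 0) as [p [Hp _]]. pose proof (metric_nonneg _ (proj1 hd) (inl (fst p)) (inr (snd p))).
    unfold dp in Hp. lra. }
  destruct (increasing_gap_seq _ dp' (2 * L + 1) Hunb) as [f [Hnear Hstep]].
  assert (Hdisj : forall k m, (k < m)%nat -> fst (f k) <> fst (f m) /\ snd (f k) <> snd (f m)).
  { intros k m Hkm. pose proof (gap_seq_lt dp' f (2 * L + 1) ltac:(lra) Hstep k m Hkm).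
    apply (far_pairs_disjoint dA dB d d' L); auto; [apply Hnear..|unfold dp' in *; lra]. }
  pose proof (inj_of_lt_neq (fun n => fst (f n)) (fun k m H => proj1 (Hdisj k m H))) as fst_inj.
  pose proof (inj_of_lt_neq (fun n => snd (f n)) (fun k m H => proj2 (Hdisj k m H))) as snd_inj.
  assert (HT : in_M d' (partial_translation A B f)).
  { apply HM, in_M_of_finite_propagation; [now apply partial_translation_bounded|].
    exists L. now apply partial_translation_propagation. }
  destruct (in_M_entry_vanishing _ _ (1 / 2) HT ltac:(lra)) as [L' HL'].
  destruct (gap_seq_unbounded dp' f (metric_nonneg _ (proj1 hd') _ _)
              ltac:(intros n; pose proof (Hstep n); lra) L') as [n Hn'].
  specialize (HL' _ _ Hn'). rewrite entry_partial_translation in HL' by exact snd_inj.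
  unfold Cnorm2, Defs.C1 in HL'; simpl in HL'. lra.
Qed.

Theorem mainTheorem8 (X Y Z : Type)
  (dX : X -> X -> R) (dY : Y -> Y -> R) (dZ : Z -> Z -> R)
  (hX : cdbg_space dX) (hY : cdbg_space dY) (hZ : cdbg_space dZ)
  (dXY dXY' : X + Y -> X + Y -> R) (dYZ dYZ' : Y + Z -> Y + Z -> R)
  (hXY : in_D dX dY dXY) (hXY' : in_D dX dY dXY')
  (hYZ : in_D dY dZ dYZ) (hYZ' : in_D dY dZ dYZ')
  (hMXY : forall T : op X Y, in_M dXY T <-> in_M dXY' T)
  (hMYZ : forall T : op Y Z, in_M dYZ T <-> in_M dYZ' T)
  (dXZ dXZ' : X + Z -> X + Z -> R)
  (hc : is_comp dX dZ dXY dYZ dXZ) (hc' : is_comp dX dZ dXY' dYZ' dXZ') :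
  forall T : op X Z, in_M dXZ T <-> in_M dXZ' T.
Proof.
  intros T. split; apply in_M_incl_of_cross_controlled.
  - apply (comp_cross_controlled dX dZ dXY dXY' dYZ dYZ'); auto;
      [exact (proj1 hXY) | exact (proj1 hYZ)
      | apply (cross_controlled_of_in_M_incl dX dY); auto; apply hMXY
      | apply (cross_controlled_of_in_M_incl dY dZ); auto; apply hMYZ].
  - apply (comp_cross_controlled dX dZ dXY' dXY dYZ' dYZ); auto;
      [exact (proj1 hXY') | exact (proj1 hYZ')
      | apply (cross_controlled_of_in_M_incl dX dY); auto; apply hMXY
      | apply (cross_controlled_of_in_M_incl dY dZ); auto; apply hMYZ].
Qed.
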